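(* Let $k\ge3$, $\omega=\lceil\ln\ln n\rceil$ and let $p=p(n)=O(1/n)$. Let $(\tilde G,\hat\sigma_1,\hat\sigma_2)$ be drawn from the binomial planted replica model $\tilde\pi_{n,p}$. (1) Let $\mathcal K(G)$ be the number of vertices $v$ of a graph $G$ such that $\partial^\omega(G,v)$ contains a cycle. Then $\tilde\pi_{n,p}[\mathcal K(\tilde G)>n^{2/3}]=o(n^{-1/2})$. (2) Let $\mathcal L$ be the event that there is a vertex $v$ such that $\partial^\omega(\tilde G,v)$ contains more than $n^{0.1}$ vertices. Then $\tilde\pi_{n,p}[\mathcal L]\leq\exp(-\Omega(\ln^2n))$.
   Context: For maps $\sigma,\tau:[n]\to[k]$, a pair $\{u,v\}$ is bichromatic under both if $\sigma(u)\ne\sigma(v)$ and $\tau(u)\ne\tau(v)$. The binomial planted replica model $\tilde\pi_{n,p}$ is the distribution of $(\tilde G,\hat\sigma_1,\hat\sigma_2)$ obtained by choosing $\hat\sigma_1,\hat\sigma_2:[n]\to[k]$ independently and uniformly, and then including each pair of vertices of $[n]$ that is bichromatic under both $\hat\sigma_1$ and $\hat\sigma_2$ as an edge independently with probability $p$. $\partial^\omega(G,v)$ is the subgraph of $G$ induced on vertices at distance at most $\omega$ from $v$. *)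

From HB Require Import structures.
From mathcomp Require Import all_boot all_order all_algebra.
From mathcomp Require Import reals sequences exp.
Set Implicit Arguments. Unset Strict Implicit. Unset Printing Implicit Defensive.
Import Order.TTheory GRing.Theory Num.Theory.
Local Open Scope ring_scope.

Section ReplicaModel.
Variables (R : realType) (n k : nat).

Definition coloring := {ffun 'I_n -> 'I_k}.
(* a graph on [n]: a set of (2-element) vertex sets *)
Definition graph := {set {set 'I_n}}.

Definition bichrom2 (s1 s2 : coloring) (A : {set 'I_n}) : bool :=
  [exists u : 'I_n, exists v : 'I_n,
     [&& A == [set u; v], u != v, s1 u != s1 v & s2 u != s2 v]].

Definition replica_weight (p : R) (G : graph) (s1 s2 : coloring) : R :=
  ((k ^ (2 * n))%:R)^-1 *
  \prod_(A : {set 'I_n})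
     (if bichrom2 s1 s2 A then (if A \in G then p else 1 - p)
      else (if A \in G then 0 else 1)).

Definition replica_prob (p : R) (Ev : graph -> bool) : R :=
  \sum_(s1 : coloring) \sum_(s2 : coloring) \sum_(G : graph)
     (if Ev G then replica_weight p G s1 s2 else 0).

Definition adj (G : graph) : rel 'I_n := fun u v => (u != v) && ([set u; v] \in G).

Fixpoint ball (G : graph) (v : 'I_n) (r : nat) : {set 'I_n} :=
  match r with
  | 0 => [set v]
  | r'.+1 => let B := ball G v r' in
             B :|: [set w | [exists u in B, adj G u w]]
  end.

Definition has_cycle_in (G : graph) (S : {set 'I_n}) : bool :=
  [exists m : 'I_n.+1, exists t : m.-tuple 'I_n,
     [&& (2 < m)%N, uniq t, all (fun x => x \in S) t & cycle (adj G) t]].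

Definition omega : nat := `|Num.ceil (ln (ln (n%:R : R)))|%N.

Definition Kcount (G : graph) : nat :=
  #|[set v | has_cycle_in G (ball G v omega)]|.

Definition Lev (G : graph) : bool :=
  [exists v : 'I_n, (n%:R : R) `^ (1 / 10) < (#|ball G v omega|)%:R].

End ReplicaModel.

(* Both bounds are first-moment estimates.  Whatever the planted colourings,
   distinct pairs are edges independently with probability p or 0, so a fixed
   set F of pairs lies in the graph with probability at most p^|F|.
   (1) If the ω-ball around v contains a cycle, the BFS-tree paths from v to the
   endpoints of a non-tree edge of that cycle, together with the edge, span a
   set S containing v of at most 2(ω+1) vertices and carrying |S| edges.  Each S
   admits at most 2(ω+1) 2^(4(ω+1)^2) choices of (v, F), and the sum over all S
   of p^|S| is (1+p)^n <= e^(np), so E[K] = exp(O((ln ln n)^2)); Markov's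
   inequality at n^(2/3) gives (1).
   (2) A ball with more than n^(1/10) >= D^ω vertices contains a vertex of degree
   at least D = ceil(ln n)^3, and a fixed star with D leaves is present with
   probability at most p^D, so P[L] <= n C(n,D) p^D <= n exp(e np - D), which is
   at most exp(-ln^2 n). *)

From HB Require Import structures.
From mathcomp Require Import all_boot all_order all_algebra.
From mathcomp Require Import reals sequences exp.
From mathcomp Require Import lra.
Set Implicit Arguments. Unset Strict Implicit. Unset Printing Implicit Defensive.
Import Order.TTheory GRing.Theory Num.Theory.
Local Open Scope ring_scope.

Lemma sum_set_expr_card (R : comPzSemiRingType) (T : finType) (x : R) :
  \sum_(A : {set T}) x ^+ #|A| = (1 + x) ^+ #|T|.
Proof.
rewrite addrC -[RHS]prodr_const (bigA_distr 1 +%R (fun=> x) (fun=> 1)) /=.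
by apply: eq_bigr => A _; rewrite -big_mkcond prodr_const.
Qed.

Section ReplicaProbability.
Variables (R : realType) (n k : nat) (p : R).
Hypothesis p01 : 0 <= p <= 1.

Lemma replica_weight_ge0 G s1 s2 : 0 <= @replica_weight R n k p G s1 s2.
Proof.
have [p0 p1] := andP p01.
rewrite mulr_ge0 ?invr_ge0 ?ler0n //; apply: prodr_ge0 => A _.
by case: bichrom2; case: (A \in G); rewrite ?subr_ge0.
Qed.

Lemma replica_prob_pred0 : replica_prob k p (fun _ : graph n => false) = 0.
Proof. by apply: big1 => s1 _; apply: big1 => s2 _; apply: big1. Qed.

Lemma replica_prob_le_count (Ev : graph n -> bool) (I : finType)
    (E : I -> graph n -> bool) (t : R) :
  0 < t -> (forall G, Ev G -> t <= #|[set i | E i G]|%:R) ->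
  replica_prob k p Ev <= t^-1 * \sum_i replica_prob k p (E i).
Proof.
move=> t0 tE.
have -> : \sum_i replica_prob k p (E i) =
    \sum_(s1 : coloring n k) \sum_(s2 : coloring n k) \sum_(G : graph n)
    #|[set i | E i G]|%:R * @replica_weight R n k p G s1 s2.
  rewrite /replica_prob [LHS]exchange_big; apply: eq_bigr => s1 _.
  rewrite [LHS]exchange_big; apply: eq_bigr => s2 _.
  rewrite [LHS]exchange_big; apply: eq_big => // G _.
  rewrite -sum1dep_card natr_sum mulr_suml [RHS]big_mkcond /=.
  by apply: eq_bigr => i _; case: (E i G); rewrite ?mul1r ?mul0r.
rewrite /replica_prob !mulr_sumr; apply: ler_sum => s1 _.
rewrite mulr_sumr; apply: ler_sum => s2 _.
rewrite mulr_sumr; apply: ler_sum => G _.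
have w0 := replica_weight_ge0 G s1 s2.
case: ifP => EvG; last by rewrite pmulr_rge0 ?invr_gt0 // mulr_ge0.
by rewrite mulrA -[leLHS]mul1r ler_wpM2r // ler_pdivlMl // mulr1 tE.
Qed.

Hypothesis k_gt0 : (0 < k)%N.

Lemma replica_prob_subset (F : {set {set 'I_n}}) :
  replica_prob k p (fun G => F \subset G) <= p ^+ #|F|.
Proof.
have [p0 p1] := andP p01.
pose c : R := (k ^ (2 * n))%:R^-1.
suff le_c s1 s2 : \sum_(G : graph n)
    (if F \subset G then @replica_weight R n k p G s1 s2 else 0) <= c * p ^+ #|F|.
  apply: le_trans (ler_sum _ (fun s1 _ => ler_sum _ (fun s2 _ => le_c s1 s2))) _.
  rewrite !sumr_const -mulrnA card_ffun !card_ord -expnD addnn -mul2n.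
  by rewrite -mulr_natl mulrA mulfV ?mul1r // pnatr_eq0 -lt0n expn_gt0 k_gt0.
(* Summing the weight over G factorizes over the pairs A: a pair of F
   contributes at most p, any other pair at most 1. *)
pose g A b : R := if bichrom2 s1 s2 A then (if b then p else 1 - p)
                  else (if b then 0 else 1).
pose h A b : R := if (A \in F) && ~~ b then 0 else g A b.
have -> : \sum_(G : graph n) (if F \subset G then replica_weight p G s1 s2 else 0)
    = c * \prod_A (h A true + h A false).
  rewrite (bigA_distr 1 +%R) mulr_sumr; apply: eq_big => // G _.
  rewrite /replica_weight -/c; case: ifP => [FG|/negbT/subsetPn [A AF AG]].
    congr (_ * _); apply: eq_bigr => A _; rewrite /h /g.
    case AG: (A \in G); rewrite ?andbF ?andbT //.
    by case AF: (A \in F) => //; rewrite (subsetP FG _ AF) in AG.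
  by rewrite (bigD1 A) //= (negbTE AG) /h AF mul0r mulr0.
rewrite ler_wpM2l ?invr_ge0 ?ler0n // -prodr_const [leRHS]big_mkcond /=.
apply: ler_prod => A _; rewrite /h /g.
by case: (A \in F); case: bichrom2; rewrite /= ?addr0 ?add0r ?subrKC ?lexx ?p0 ?ler01.
Qed.

Lemma replica_prob_le_subgraph_count (Ev : graph n -> bool) (I : finType)
    (P : pred I) (F : I -> {set {set 'I_n}}) (t : R) :
  0 < t -> (forall G, Ev G -> t <= #|[set i | P i && (F i \subset G)]|%:R) ->
  replica_prob k p Ev <= t^-1 * \sum_(i | P i) p ^+ #|F i|.
Proof.
move=> t0 tE.
apply: le_trans (replica_prob_le_count (E := fun i G => P i && (F i \subset G)) t0 tE) _.
rewrite ler_wpM2l ?invr_ge0 ?(ltW t0) // [leRHS]big_mkcond /=.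
apply: ler_sum => i _; case: (P i); first exact: replica_prob_subset.
by rewrite replica_prob_pred0.
Qed.

End ReplicaProbability.

Lemma uniq_cycle_neighbours (T : eqType) (e : rel T) (s : seq T) (x : T) :
  x \in s -> uniq s -> (2 < size s)%N -> cycle e s ->
  exists y z, [/\ y \in s, z \in s, e x y, e z x & y != z].
Proof.
move=> xs us ss cs; have := rot_index xs; set r := drop _ _ ++ _ => er.
have : uniq (x :: r) by rewrite -er rot_uniq.
have : cycle e (x :: r) by rewrite -er rot_cycle.
have : size (x :: r) = size s by rewrite -er size_rot.
have mem_r u : u \in r -> u \in s.
  by move=> ur; rewrite -(mem_rot (index x s)) er inE ur orbT.
case: r mem_r {er} => [|y [|z r]] mem_r /= sz; rewrite -?sz // in ss.
move=> /andP [exy]; rewrite rcons_path => /andP [_ /andP [_ ezx]].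
case/andP => _ /andP [yNzr _].
exists y, (last z r); split => //.
- by rewrite mem_r ?inE ?eqxx.
- by rewrite mem_r // inE mem_last orbT.
- by apply: contraNneq _ yNzr => ->; exact: mem_last.
Qed.

Lemma card_bigcup_le (I T : finType) (P : pred I) (F : I -> {set T}) :
  (#|\bigcup_(i | P i) F i| <= \sum_(i | P i) #|F i|)%N.
Proof.
elim/big_ind2: _ => [|m A l B Am Bl|//]; first by rewrite cards0.
by rewrite (leq_trans (leq_card_setU _ _)) // leq_add.
Qed.

Definition edges_within (n : nat) (S : {set 'I_n}) : {set {set 'I_n}} :=
  [set A : {set 'I_n} | (A \subset S) && (#|A| == 2)].

Section Balls.
Local Open Scope nat_scope.
Variables (n : nat) (G : graph n) (v : 'I_n).
Local Notation B := (ball G v).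

Lemma subset_ball r r' : r <= r' -> B r \subset B r'.
Proof.
move/subnKC <-; elim: (r' - r) => [|d IH]; first by rewrite addn0.
by rewrite addnS (subset_trans IH) //= subsetUl.
Qed.

Lemma center_in_ball r : v \in B r.
Proof. exact: subsetP (subset_ball (leq0n r)) v (set11 v). Qed.

Lemma in_ballS r x : (x \in B r.+1) = (x \in B r) || [exists u in B r, adj G u x].
Proof. by rewrite /= !inE. Qed.

Lemma card_ball_le (D : nat) : (forall u, #|[set x | adj G u x]| < D) ->
  forall r, #|B r| <= D ^ r.
Proof.
move=> degD; have D_gt0 : 0 < D by apply: leq_ltn_trans (degD v).
have degD' u : #|[set x | adj G u x]| <= D.-1 by rewrite -ltnS prednK.
elim=> [|r IH]; first by rewrite cards1.
rewrite /= expnSr.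
have -> : [set x | [exists u in B r, adj G u x]] = \bigcup_(u in B r) [set x | adj G u x].
  by apply/setP => x; rewrite inE; apply/existsP/bigcupP => -[u];
    [case/andP => ur ux | move=> ur; rewrite inE => ux]; exists u; rewrite ?inE ?ur.
rewrite (leq_trans (leq_card_setU _ _).1) //.
rewrite (leq_trans (leq_add (leqnn _) (card_bigcup_le _ _))) //.
rewrite (leq_trans (leq_add (leqnn _) (_ : _ <= \sum_(u in B r) D.-1))) ?leq_sum //.
rewrite sum_nat_const -[X in X + _]muln1 -mulnDr add1n prednK //.
by rewrite leq_mul2r IH orbT.
Qed.

Variable w : nat.

(* [depth x = w.+1] for [x] outside [B w]. *)
Definition depth x := find (fun r => x \in B r) (iota 0 w.+1).

Lemma depth_spec x : x \in B w -> depth x <= w /\ x \in B (depth x).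
Proof.
move=> xw; have has_r : has (fun r => x \in B r) (iota 0 w.+1).
  by apply/hasP; exists w; rewrite ?mem_iota ?add0n ?ltnSn.
have := nth_find 0 has_r; move: has_r; rewrite has_find size_iota ltnS => dw.
by rewrite nth_iota ?add0n // ltnS.
Qed.

Lemma depth_min x r : r <= w -> x \in B r -> depth x <= r.
Proof.
move=> rw xr; rewrite leqNgt; apply/negP => /(before_find 0).
by rewrite nth_iota ?add0n ?xr.
Qed.

Lemma depth_eq0 x : x \in B w -> (depth x == 0) = (x == v).
Proof.
move=> /depth_spec [_ xd]; apply/eqP/eqP => [d0|->].
  by move: xd; rewrite d0 inE => /eqP.
by apply/eqP; rewrite -leqn0 depth_min // inE.
Qed.

Definition parent x :=
  if depth x is r.+1 then odflt x [pick u in B r | adj G u x] else x.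

Lemma parent_center : parent v = v.
Proof.
have /eqP dv0 : depth v == 0 by rewrite depth_eq0 ?center_in_ball.
by rewrite /parent dv0.
Qed.

Lemma parent_spec x : x \in B w -> x != v ->
  [/\ adj G (parent x) x, parent x \in B w & depth (parent x) < depth x].
Proof.
move=> xw xv; have [dw xd] := depth_spec xw.
have : depth x != 0 by rewrite depth_eq0.
rewrite /parent; case E: (depth x) => [|r] // _; rewrite E in dw xd.
have xNr : x \notin B r by apply/negP => /(depth_min (ltnW dw)); rewrite E ltnn.
case: pickP => [u /andP [ur ux]|none]; last first.
  move: xd; rewrite in_ballS (negbTE xNr) => /existsP [u /andP [ur ux]].
  by move: (none u); rewrite ur ux.
split => //=; first exact: subsetP (subset_ball (ltnW dw)) u ur.
by rewrite ltnS depth_min // ltnW.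
Qed.

Lemma parent_in_ball x : x \in B w -> parent x \in B w.
Proof.
move=> xw; have [->|xv] := eqVneq x v; first by rewrite parent_center center_in_ball.
by case: (parent_spec xw xv).
Qed.

Lemma parent_neq x u : u \in B w -> depth u <= depth x -> u != x -> parent u != x.
Proof.
move=> uw dux uNx; have [uv|uv] := eqVneq u v; first by rewrite uv parent_center -uv.
case: (parent_spec uw uv) => _ _ lt.
by apply: contraTneq (leq_trans lt dux) => ->; rewrite ltnn.
Qed.

Lemma iter_parent x i : x \in B w ->
  iter i parent x \in B w /\ depth (iter i parent x) <= depth x - i.
Proof.
move=> xw; elim: i => [|i [yw IH]] /=; first by rewrite subn0.
set y := iter i parent x in yw IH *; split; first exact: parent_in_ball.
have [->|yv] := eqVneq y v.
  by rewrite parent_center; have /eqP -> : depth v == 0 by rewrite depth_eq0 ?center_in_ball.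
case: (parent_spec yw yv) => _ _ lt.
by rewrite subnS -ltnS (leq_trans lt) // (leq_trans IH) // leqSpred.
Qed.

Definition ancestors x := [set iter i parent x | i : 'I_w.+1].

Lemma mem_ancestors x : x \in ancestors x.
Proof. by apply/imsetP; exists ord0. Qed.

Lemma card_ancestors x : #|ancestors x| <= w.+1.
Proof. by rewrite (leq_trans (leq_imset_card _ _)) // card_ord. Qed.

Lemma ancestors_sub_ball x : x \in B w -> ancestors x \subset B w.
Proof. by move=> xw; apply/subsetP => _ /imsetP [i _ ->]; case: (iter_parent i xw). Qed.

Lemma center_in_ancestors x : x \in B w -> v \in ancestors x.
Proof.
move=> xw; have [dw _] := depth_spec xw; apply/imsetP.
exists (Ordinal (dw : depth x < w.+1)) => //=; have [yw] := iter_parent (depth x) xw.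
by rewrite subnn leqn0 depth_eq0 // => /eqP.
Qed.

Lemma parent_in_ancestors x y : x \in B w -> y \in ancestors x -> parent y \in ancestors x.
Proof.
move=> xw /imsetP [i _ ->]; set z := iter i parent x.
have [zw dz] := iter_parent i xw; have [dw _] := depth_spec xw.
have [zv|zv] := eqVneq z v; first by rewrite zv parent_center -zv; apply/imsetP; exists i.
have lt_iw : i < w.
  rewrite (leq_trans _ dw) // -subn_gt0 (leq_trans _ dz) // lt0n depth_eq0 //.
by apply/imsetP; exists (Ordinal (lt_iw : i.+1 < w.+1)).
Qed.

(* At a deepest vertex x of the cycle, no cycle neighbour has parent x, and at
   most one of the two cycle neighbours of x is the parent of x. *)
Lemma nontree_edge : has_cycle_in G (B w) ->
  exists a b, [/\ a \in B w, b \in B w, adj G a b, parent a != b & parent b != a].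
Proof.
case/existsP => m /existsP [t /and4P [m_gt2 t_uniq /allP t_ball t_cycle]].
have m_gt0 : 0 < m by apply: leq_trans m_gt2.
have [i _ i_max] := @arg_maxnP _ (Ordinal m_gt0) xpredT (fun i => depth (tnth t i)) isT.
set x := tnth t i in i_max.
have x_max u : u \in t -> depth u <= depth x by case/tnthP => j ->; apply: i_max.
have t_size : 2 < size t by rewrite size_tuple.
have [y [z [yt zt xy zx yz]]] := uniq_cycle_neighbours (mem_tnth i t) t_uniq t_size t_cycle.
have [xw yw zw] := And3 (t_ball x (mem_tnth i t)) (t_ball y yt) (t_ball z zt).
have [pxy|pxy] := eqVneq (parent x) y.
  exists z, x; split; rewrite ?pxy //; apply: parent_neq; rewrite ?x_max //.
  by case/andP: zx.
exists x, y; split => //; apply: parent_neq; rewrite ?x_max // eq_sym.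
by case/andP: xy.
Qed.

Definition tree_edge x := [set x; parent x].

Lemma tree_edge_inj : {in B w :\ v &, injective tree_edge}.
Proof.
move=> x y /setD1P [xv xw] /setD1P [yv yw] exy; apply/eqP; apply: contraT => xNy.
have [_ _ dx] := parent_spec xw xv; have [_ _ dy] := parent_spec yw yv.
have : x \in tree_edge y by rewrite -exy set21.
have : y \in tree_edge x by rewrite exy set21.
rewrite !in_set2 (negbTE xNy) eq_sym (negbTE xNy) /= => /eqP yx /eqP xy.
by rewrite -yx in dx; rewrite -xy in dy; move: (ltn_trans dx dy); rewrite ltnn.
Qed.

Lemma tree_edge_eq a b x :
  tree_edge x = [set a; b] -> [|| a == b, parent a == b | parent b == a].
Proof.
move=> e; have : a \in tree_edge x by rewrite e set21.
have : b \in tree_edge x by rewrite e set22.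
by rewrite !in_set2 => /orP [] /eqP -> /orP [] /eqP ->; rewrite ?eqxx ?orbT.
Qed.

Lemma tree_edge_in_graph x : x \in B w -> x != v -> tree_edge x \in G.
Proof. by move=> xw xv; case: (parent_spec xw xv) => /andP [_]; rewrite setUC. Qed.

Lemma tree_edge_within (S : {set 'I_n}) x :
  x \in S -> parent x \in S -> x \in B w -> x != v -> tree_edge x \in edges_within S.
Proof.
move=> xS pS xw xv; case: (parent_spec xw xv) => /andP [pNx _] _ _.
by rewrite inE subUset !sub1set xS pS cards2 (eq_sym x) pNx.
Qed.

(* The ancestors of the endpoints of a non-tree edge carry one tree edge per
   vertex other than [v]; the non-tree edge makes up the count. *)
Lemma cycle_in_ball_dense : has_cycle_in G (B w) ->
  exists (S : {set 'I_n}) (F : {set {set 'I_n}}),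
    [/\ v \in S, #|S| <= 2 * w.+1, F \subset edges_within S,
                  #|F| = #|S| & F \subset G].
Proof.
case/nontree_edge => a [b [aw bw /andP [aNb abG] pab pba]].
set S := ancestors a :|: ancestors b.
have Sw : S \subset B w by rewrite subUset !ancestors_sub_ball.
have S_parent y : y \in S -> parent y \in S.
  by case/setUP => yA; rewrite inE
    ?(parent_in_ancestors aw yA) ?(parent_in_ancestors bw yA) ?orbT.
have vS : v \in S by rewrite inE center_in_ancestors.
have memSD1 y : y \in S :\ v -> [/\ y \in S, y \in B w & y != v].
  by case/setD1P => yv yS; rewrite yS yv (subsetP Sw).
have abNT : [set a; b] \notin tree_edge @: (S :\ v).
  by apply/imsetP => -[y _ /esym/tree_edge_eq]; rewrite (negbTE aNb) (negbTE pab) (negbTE pba).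
exists S, ([set a; b] |: tree_edge @: (S :\ v)); split => //.
- by rewrite mul2n -addnn (leq_trans (leq_card_setU _ _).1) ?leq_add ?card_ancestors.
- rewrite subUset sub1set inE subUset !sub1set !inE !mem_ancestors orbT cards2 aNb /=.
  apply/subsetP => _ /imsetP [y /memSD1 [yS yw yv] ->].
  exact: tree_edge_within yS (S_parent y yS) yw yv.
- rewrite cardsU1 abNT card_in_imset ?(cardsD1 v S) ?vS //.
  by apply: sub_in2 tree_edge_inj => y /memSD1 [_ yw yv]; exact/setD1P.
- rewrite subUset sub1set abG; apply/subsetP => _ /imsetP [y /memSD1 [_ yw yv] ->].
  exact: tree_edge_in_graph yw yv.
Qed.

End Balls.

Section DenseWitnesses.
Variables (n L : nat).

Lemma card_edges_within (S : {set 'I_n}) : (#|edges_within S| <= #|S| * #|S|)%N.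
Proof.
have sub : edges_within S \subset [set [set u.1; u.2] | u in setX S S].
  apply/subsetP => A; rewrite inE => /andP [AS /cards2P [x [y [_ eA]]]].
  by apply/imsetP; exists (x, y); rewrite // inE /=; move: AS; rewrite eA subUset !sub1set.
by rewrite (leq_trans (subset_leq_card sub)) // (leq_trans (leq_imset_card _ _)) // cardsX.
Qed.

(* The constraint [#|F| = #|W|] lets the weight [p ^+ #|F|] of a witness
   depend on [W] only. *)
Definition dense_witness : pred ({set 'I_n} * ('I_n * {set {set 'I_n}})) :=
  fun '(W, (u, F)) =>
    [&& u \in W, (#|W| <= L)%N, F \subset edges_within W & #|F| == #|W|].

Lemma card_dense_witness (S : {set 'I_n}) :
  (#|[set j | dense_witness (S, j)]| <= L * 2 ^ (L * L))%N.
Proof.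
case: (leqP #|S| L) => [SL|LS]; last first.
  by apply: leq_trans (leq0n _); rewrite leqn0 cards_eq0; apply/eqP/setP => -[v F];
    rewrite !inE /= leqNgt LS andbF.
have sub : [set j | dense_witness (S, j)] \subset setX S (powerset (edges_within S)).
  by apply/subsetP => -[v F]; rewrite !inE /= => /and4P [-> _ -> _].
rewrite (leq_trans (subset_leq_card sub)) // cardsX card_powerset leq_mul //.
by rewrite leq_pexp2l // (leq_trans (card_edges_within S)) // leq_mul.
Qed.

Lemma sum_dense_witness (R : realType) (x : R) : 0 <= x ->
  \sum_(i | dense_witness i) x ^+ #|i.2.2| <= (L * 2 ^ (L * L))%:R * (1 + x) ^+ n.
Proof.
move=> x0; rewrite (eq_bigl (fun i => xpredT i.1 && dense_witness (i.1, i.2))) => [|[]//].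
rewrite -(pair_big_dep xpredT (fun S j => dense_witness (S, j)) (fun S j => x ^+ #|j.2|)) /=.
rewrite -[n in (1 + x) ^+ n]card_ord -sum_set_expr_card mulr_sumr.
apply: ler_sum => S _.
rewrite (eq_bigr (fun=> x ^+ #|S|)) => [|[u F] /and4P [_ _ _ /eqP -> //]].
rewrite (eq_bigl (fun j => j \in [set j | dense_witness (S, j)])) => [|j]; last by rewrite inE.
by rewrite sumr_const -[leLHS]mulr_natl ler_wpM2r ?exprn_ge0 // ler_nat card_dense_witness.
Qed.

End DenseWitnesses.

Definition star (n : nat) (u : 'I_n) (W : {set 'I_n}) : {set {set 'I_n}} :=
  [set [set u; x] | x in W].

Lemma card_star (n : nat) (u : 'I_n) (W : {set 'I_n}) : #|star u W| = #|W|.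
Proof.
apply: card_imset => x y exy; have : y \in [set u; x] by rewrite exy set22.
have : x \in [set u; y] by rewrite -exy set22.
by rewrite !in_set2 => /orP [] /eqP xe /orP [] /eqP ye; congruence.
Qed.

Section TailBounds.
Variables (R : realType) (n k : nat) (p : R).
Hypotheses (p01 : 0 <= p <= 1) (k_gt0 : (0 < k)%N).

Lemma cycle_count_prob_le (om : nat) (t : R) : 0 < t ->
  replica_prob k p (fun G : graph n => t < #|[set v | has_cycle_in G (ball G v om)]|%:R)
  <= t^-1 * ((2 * om.+1 * 2 ^ (2 * om.+1 * (2 * om.+1)))%:R * (1 + p) ^+ n).
Proof.
move=> t0; set L := (2 * om.+1)%N.
apply: le_trans (replica_prob_le_subgraph_count p01 k_gt0
  (P := dense_witness L) (F := fun i => i.2.2) t0 _) _; last first.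
  by rewrite ler_wpM2l ?invr_ge0 ?(ltW t0) // sum_dense_witness //; case/andP: p01.
move=> G /ltW /le_trans; apply; rewrite ler_nat.
have : [set v | has_cycle_in G (ball G v om)] \subset
    [set i.2.1 | i in [set i | dense_witness L i && (i.2.2 \subset G)]].
  apply/subsetP => v; rewrite inE => /cycle_in_ball_dense [S [F [vS cS FS cF FG]]].
  by apply/imsetP; exists (S, (v, F)); rewrite // inE /= vS cS FS cF eqxx FG.
by move/subset_leq_card/leq_trans; apply; apply: leq_imset_card.
Qed.

Lemma big_ball_prob_le (om D : nat) (thr : R) : (0 < D)%N -> (D ^ om)%:R <= thr ->
  replica_prob k p (fun G : graph n => [exists v, thr < #|ball G v om|%:R])
  <= (n * 'C(n, D))%:R * p ^+ D.
Proof.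
move=> D_gt0 Dthr.
apply: le_trans (replica_prob_le_subgraph_count p01 k_gt0
  (P := fun i : 'I_n * {set 'I_n} => #|i.2| == D) (F := fun i => star i.1 i.2) ltr01 _) _.
  move=> G /existsP [v big]; rewrite ler1n card_gt0; apply/set0Pn.
  have [u] : exists u, (D <= #|[set x | adj G u x]|)%N.
    apply/existsP; apply: contraLR big => /existsPn small.
    rewrite -leNgt (le_trans _ Dthr) // ler_nat card_ball_le // => u.
    by rewrite ltnNge small.
  case/card_geqP => s [s_uniq s_size s_adj]; exists (u, [set x in s]).
  rewrite inE /= cardsE (card_uniqP s_uniq) s_size eqxx /=.
  by apply/subsetP => A /imsetP [x]; rewrite inE => /s_adj; rewrite inE => /andP [_ uxG] ->.
rewrite invr1 mul1r (eq_bigr (fun=> p ^+ D)) => [|i /eqP iD]; last by rewrite card_star iD.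
rewrite (eq_bigl (fun i => i \in setX [set: 'I_n] [set W : {set 'I_n} | #|W| == D])).
  by rewrite sumr_const cardsX cardsT card_draws !card_ord mulr_natl.
by move=> [u W]; rewrite !inE.
Qed.

End TailBounds.

Section RealBounds.
Variable R : realType.
Implicit Types (x y z q : R).

Lemma le_ln_of_expR_le y z : expR y <= z -> y <= ln z.
Proof. by move=> yz; rewrite -ler_expR lnK // posrE (lt_le_trans (expR_gt0 y)). Qed.

Lemma natr_absz_ceil_bounds z : 0 <= z ->
  z <= (`|Num.ceil z|%N)%:R /\ (`|Num.ceil z|%N)%:R < z + 1 :> R.
Proof.
move=> z0; have c0 : 0 <= Num.ceil z by rewrite ceil_ge0 (lt_le_trans _ z0) ?ltrN10.
rewrite natr_absz ger0_norm //; have /andP [lt le] := ceil_itv z.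
by split => //; move: lt; rewrite intrB /=; lra.
Qed.

Lemma quadratic_le_expR (a b y : R) : 0 <= a -> 6 * (1 + a + `|b|) <= y ->
  a * y ^+ 2 + b <= expR y.
Proof.
move=> a0 ya; have y0 : 0 <= y by have := normr_ge0 b; lra.
have cube : y ^+ 3 / 6 <= expR y.
  apply: le_trans (expR_ge1Dxn 2 y0); have -> : (3`!)%:R = 6 :> R by [].
  by rewrite lerDr.
have y2_ge1 : 1 <= y ^+ 2 by rewrite expr2; have := normr_ge0 b; nra.
have bb := ler_norm b; have b0 := normr_ge0 b.
have : y ^+ 2 * (6 * (1 + a + `|b|)) <= y ^+ 2 * y by rewrite ler_wpM2l ?exprn_ge0.
rewrite -exprSr in cube *; nra.
Qed.

Lemma natr_cube_pow_le_expR (z w : nat) y : 726 <= y -> w%:R <= y + 1 ->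
  z%:R < expR y + 1 -> ((z ^ 3) ^ w)%:R <= expR (expR y * (1 / 10)).
Proof.
move=> y_ge wy zy; have y1 : 1 <= y by lra.
have z_le : z%:R <= expR (y + 1).
  have : expR y * 2 <= expR y * expR 1.
    by rewrite ler_wpM2l ?expR_ge0 //; have := expR_ge1Dx (1 : R); lra.
  by rewrite expRD; have := expR_ge1Dx y; lra.
rewrite -expnM natrX (le_trans (lerXn2r _ _ _ z_le)) ?nnegrE ?ler0n ?expR_ge0 //.
rewrite -expRM_natl ler_expR natrM.
(* 3 w (y + 1) <= 12 y^2 <= e^y / 10 *)
have y120 : 6 * (1 + 120 + `|0 : R|) <= y by rewrite normr0 addr0; lra.
have := quadratic_le_expR (ler0n R 120) y120; rewrite addr0.
have : w%:R * (y + 1) <= (y + 1) ^+ 2 by rewrite expr2 ler_wpM2r //; lra.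
have : (y + 1) ^+ 2 <= 4 * y ^+ 2 by rewrite !expr2; nra.
rewrite -mulrA; lra.
Qed.

Lemma exprDn_le_expR (n : nat) q : 0 <= q -> (1 + q) ^+ n <= expR (n%:R * q).
Proof.
move=> q0; rewrite expRM_natl lerXn2r ?nnegrE ?addr_ge0 ?expR_ge0 //.
exact: expR_ge1Dx.
Qed.

Lemma bin_exprn_le_exprDn (n D : nat) q : 0 <= q -> 'C(n, D)%:R * q ^+ D <= (1 + q) ^+ n.
Proof.
move=> q0; case: (ltnP n D) => [nD|Dn].
  by rewrite bin_small // mul0r exprn_ge0 // addr_ge0.
rewrite exprDn (bigD1 (Ordinal (Dn : (D < n.+1)%N))) //= expr1n mul1r mulr_natl.
by rewrite lerDl sumr_ge0 // => i _; rewrite expr1n mul1r mulrn_wge0 // exprn_ge0.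
Qed.

Lemma bin_exprn_le_expR (n D : nat) q : 0 <= q ->
  'C(n, D)%:R * q ^+ D <= expR (expR 1 * (n%:R * q) - D%:R).
Proof.
move=> q0; have eq0 : 0 <= expR 1 * q by rewrite mulr_ge0 ?expR_ge0.
rewrite expRB ler_pdivlMr ?expR_gt0 // -[X in expR X]mulr1 expRM_natl.
rewrite -mulrA -exprMn (mulrC q).
apply: le_trans (bin_exprn_le_exprDn n D eq0) _.
by rewrite mulrCA exprDn_le_expR.
Qed.

Lemma witness_count_le_expR (L n : nat) q : 0 <= q ->
  (L * 2 ^ (L * L))%:R * (1 + q) ^+ n <= expR (L%:R + L%:R ^+ 2 + n%:R * q).
Proof.
move=> q0; rewrite !expRD natrM; apply: ler_pM; rewrite ?mulr_ge0 ?exprn_ge0 ?addr_ge0 //.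
  apply: ler_pM => //; first by have := expR_ge1Dx (L%:R : R); lra.
  rewrite natrX expr2 -natrM -[X in expR X]mulr1 expRM_natl lerXn2r ?nnegrE ?expR_ge0 //.
  by have := expR_ge1Dx (1 : R); lra.
exact: exprDn_le_expR.
Qed.

Lemma eventually_lnln_ge (Y : R) (N0 : nat) : exists N, forall n : nat, (N <= n)%N ->
  [/\ (N0 <= n)%N, Y <= ln (ln n%:R),
      n%:R = expR (ln n%:R) :> R & ln n%:R = expR (ln (ln n%:R)) :> R].
Proof.
have [c_ge c_lt] := natr_absz_ceil_bounds (expR_ge0 (expR Y)).
exists (maxn N0 (`|Num.ceil (expR (expR Y))|%N)) => n; rewrite geq_max => /andP [nN0 nc].
have nY : expR (expR Y) <= n%:R by rewrite (le_trans c_ge) // ler_nat.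
have lnY : expR Y <= ln n%:R := le_ln_of_expR_le nY.
split => //; first exact: le_ln_of_expR_le.
  by rewrite lnK // posrE (lt_le_trans (expR_gt0 _) nY).
by rewrite lnK // posrE (lt_le_trans (expR_gt0 _) lnY).
Qed.

Lemma omega_le (n : nat) :
  0 <= ln (ln (n%:R : R)) -> (omega R n)%:R <= ln (ln (n%:R : R)) + 1.
Proof. by move=> /natr_absz_ceil_bounds [_ /ltW]. Qed.

End RealBounds.

Section Asymptotics.
Variables (R : realType) (k : nat) (p : nat -> R) (C : R) (N0 : nat).
Hypotheses (p01 : forall n, 0 <= p n <= 1) (k_gt0 : (0 < k)%N)
  (p_le : forall n, (N0 <= n)%N -> p n <= C / n%:R).

Lemma p_ge0 n : 0 <= p n. Proof. by case/andP: (p01 n). Qed.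

Lemma np_le n : (N0 <= n)%N -> (0 < n)%N -> n%:R * p n <= C.
Proof. by move=> nN0 n0; rewrite mulrC -ler_pdivlMr ?ltr0n ?p_le. Qed.

Lemma Kcount_tail (eps : R) : 0 < eps -> exists N, forall n : nat, (N <= n)%N ->
  replica_prob k (p n) (fun G => (n%:R : R) `^ (2 / 3) < (@Kcount R n G)%:R)
  <= eps * (n%:R : R) `^ (- (1 / 2)).
Proof.
move=> eps0; set K := C - ln eps.
(* With L <= 6y for y = ln ln n, 6 (L + L^2 + K) <= 252 y^2 + 6K <= e^y = ln n. *)
have [N large] := eventually_lnln_ge (6 * (1 + 252 + `|6 * K|)) N0.
exists N => n /large [nN0]; set x := ln n%:R; set y := ln x => yY nx xy.
have y1 : 1 <= y by have := normr_ge0 (6 * K); lra.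
have n0 : (0 < n)%N by rewrite -(ltr0n R) nx expR_gt0.
set L := (2 * (omega R n).+1)%N.
have L_le : L%:R <= 6 * y.
  have := omega_le (le_trans ler01 y1); rewrite -/x -/y /L natrM -addn1 natrD; lra.
have t0 : 0 < (n%:R : R) `^ (2 / 3) by rewrite powR_gt0 ?ltr0n.
rewrite /Kcount; apply: le_trans (cycle_count_prob_le n (p01 n) k_gt0 (omega R n) t0) _.
rewrite nx -!expRM -expRN; apply: le_trans (ler_wpM2l (expR_ge0 _)
  (witness_count_le_expR L n (p_ge0 n))) _.
rewrite -expRD -[eps]lnK ?posrE // -expRD ler_expR.
have quad := quadratic_le_expR (b := 6 * K) (ler0n R 252) yY; rewrite -xy in quad.
have L2 : L%:R ^+ 2 <= 36 * y ^+ 2.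
  have : L%:R * L%:R <= 6 * y * (6 * y) by apply: ler_pM; rewrite ?ler0n ?L_le.
  by rewrite !expr2; lra.
have y_y2 : y <= y ^+ 2 by rewrite expr2 ler_peMr //; lra.
have := np_le nN0 n0; rewrite /K in quad; lra.
Qed.

Lemma Lev_tail : exists N, forall n : nat, (N <= n)%N ->
  replica_prob k (p n) (@Lev R n) <= expR (- (1 * ln (n%:R : R) ^+ 2)).
Proof.
have eC0 := normr_ge0 (expR 1 * C); have eC_le := ler_norm (expR 1 * C).
have [N large] := eventually_lnln_ge (6 * (1 + 120 + `|expR 1 * C|)) N0.
exists N => n /large [nN0]; set x := ln n%:R; set y := ln x => yY nx xy.
have x_ge : y + 1 <= x by rewrite xy addrC expR_ge1Dx.
have n0 : (0 < n)%N by rewrite -(ltr0n R) nx expR_gt0.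
have x1 : 1 <= x by lra.
have [z_ge z_lt] := natr_absz_ceil_bounds (le_trans ler01 x1).
set z := `|Num.ceil x|%N in z_ge z_lt.
have z0 : (0 < z ^ 3)%N by rewrite expn_gt0 -(ltr0n R) (lt_le_trans _ z_ge) //; lra.
apply: le_trans (big_ball_prob_le n (p01 n) k_gt0 z0 (thr := (n%:R : R) `^ (1 / 10)) _) _.
  have om : (omega R n)%:R <= y + 1 by apply: omega_le; rewrite -/x -/y; lra.
  rewrite nx -expRM xy natr_cube_pow_le_expR //; [lra | by rewrite -xy].
rewrite natrM -mulrA nx.
apply: le_trans (ler_wpM2l (expR_ge0 _) (bin_exprn_le_expR n (z ^ 3) (p_ge0 n))) _.
rewrite -expRD ler_expR.
have := ler_wpM2l (expR_ge0 1) (np_le nN0 n0).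
have : x ^+ 3 <= (z ^ 3)%:R by rewrite natrX lerXn2r ?nnegrE ?ler0n //; lra.
have : x ^+ 2 * (3 + `|expR 1 * C|) <= x ^+ 3.
  by rewrite [leRHS]exprSr ler_wpM2l ?exprn_ge0 //; lra.
have x_x2 : x <= x ^+ 2 by rewrite expr2; nra.
have : `|expR 1 * C| <= x ^+ 2 * `|expR 1 * C| by nra.
rewrite mulrDr; lra.
Qed.

End Asymptotics.

Theorem lemma4p3 (R : realType) (k : nat) (p : nat -> R) :
  (3 <= k)%N ->
  (forall n, 0 <= p n <= 1) ->
  (exists C : R, exists N : nat, forall n : nat, (N <= n)%N -> p n <= C / n%:R) ->
  (forall eps : R, 0 < eps -> exists N : nat, forall n : nat, (N <= n)%N ->
     @replica_prob R n k (p n)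
       (fun G => (n%:R : R) `^ (2 / 3) < (@Kcount R n G)%:R)
     <= eps * (n%:R : R) `^ (- (1 / 2))) /\
  (exists c : R, 0 < c /\ exists N : nat, forall n : nat, (N <= n)%N ->
     @replica_prob R n k (p n) (@Lev R n) <= expR (- (c * ln (n%:R : R) ^+ 2))).
Proof.
move=> k_ge3 p01 [C [N0 p_le]]; have k_gt0 : (0 < k)%N by apply: leq_trans k_ge3.
split; first exact: Kcount_tail p01 k_gt0 p_le.
by exists 1; split; [exact: ltr01 | exact: Lev_tail p01 k_gt0 p_le].
Qed.
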